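(* Let $G=G(k,m,P)$ be a random intersection graph with set sizes $X_1,\dots,X_k$. For any integers $x_1,\dots,x_k$ such that the event $B=\{X_1=x_1,\dots,X_k=x_k\}$ has positive probability, $$\mathbb P\big(G\text{ has a rainbow }K_k\,\big|\,B\big)\le m^{-k(k-1)/2}(x_1x_2\cdots x_k)^{k-1}.$$
   Context: Random intersection graph: given positive integers $k,m$ and a probability measure $P$ on $\{0,\dots,m\}$, $G(k,m,P)$ has vertex set $[k]$ and attribute set $W$ with $|W|=m$; independent random subsets $S_1,\dots,S_k\subseteq W$ with $\mathbb P(S_v=S)=P(|S|)/\binom{m}{|S|}$; distinct $u,v$ adjacent iff $S_u\cap S_v\ne\emptyset$; $X_v=|S_v|$. ''$G$ has a rainbow $K_k$'' means there is an injective assignment of attributes to the $\binom k2$ pairs of vertices such that the attribute assigned to each pair $\{u,v\}$ lies in $S_u\cap S_v$. *)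

From HB Require Import structures.
From mathcomp Require Import all_boot all_order all_algebra.
Set Implicit Arguments. Unset Strict Implicit. Unset Printing Implicit Defensive.
Import Order.TTheory GRing.Theory Num.Theory.
Local Open Scope ring_scope.

(* Random intersection graph G(k,m,P): vertex set 'I_k, attribute set W = 'I_m.
   P : 'I_m.+1 -> R is the probability measure on {0,...,m}. *)
Definition outcome (k m : nat) := {ffun 'I_k -> {set 'I_m}}.

(* P(S_v = S) = P(|S|) / C(m,|S|); the S_v are independent. *)
Definition set_weight (R : realFieldType) (m : nat) (P : 'I_m.+1 -> R)
  (S : {set 'I_m}) : R :=
  P (inord #|S|) / ('C(m, #|S|))%:R.

Definition outcome_weight (R : realFieldType) (k m : nat) (P : 'I_m.+1 -> R)
  (S : outcome k m) : R :=
  \prod_(v < k) set_weight P (S v).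

Definition prob (R : realFieldType) (k m : nat) (P : 'I_m.+1 -> R)
  (E : pred (outcome k m)) : R :=
  \sum_(S : outcome k m | E S) outcome_weight P S.

Definition cond_prob (R : realFieldType) (k m : nat) (P : 'I_m.+1 -> R)
  (A B : pred (outcome k m)) : R :=
  prob P [pred S | A S && B S] / prob P B.

(* A pair {u,v} is represented by (u,v) with u < v. *)
Definition has_rainbow_clique (k m : nat) (S : outcome k m) : bool :=
  [exists f : {ffun 'I_k * 'I_k -> 'I_m},
     [forall u : 'I_k, forall v : 'I_k,
        (u < v)%N ==> (f (u, v) \in S u :&: S v)] &&
     [forall u : 'I_k, forall v : 'I_k, forall u' : 'I_k, forall v' : 'I_k,
        [&& (u < v)%N, (u' < v')%N & f (u, v) == f (u', v')] ==>
          ((u == u') && (v == v'))]].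

Definition sizes_event (k m : nat) (x : 'I_k -> int) : pred (outcome k m) :=
  [pred S : outcome k m | [forall v : 'I_k, (#|S v|%:Z == x v)]].

From HB Require Import structures.
From mathcomp Require Import all_boot all_order all_algebra.
From mathcomp Require Import zify ring.
Set Implicit Arguments. Unset Strict Implicit. Unset Printing Implicit Defensive.
Import Order.TTheory GRing.Theory Num.Theory.

(* Conditioned on the size event B = {|S_v| = n_v for all v}, every outcome of
   B has the same weight, so P(rainbow K_k | B) = #(rainbow outcomes in B)/#B.
   A rainbow K_k is witnessed by an injective labelling g of the C(k,2) pairs
   of vertices by attributes; there are at most m^C(k,2) such labellings.  For a
   fixed g, each S_v must contain the k-1 labels of the pairs at v, and
   the number of n-sets containing a fixed t-set is at most C(m,n) (n/m)^t.
   Summing over the labellings (union bound) gives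
     #(rainbow outcomes in B) * m^C(k,2) <= #B * (n_1 ... n_k)^(k-1). *)

Local Open Scope nat_scope.

Lemma bin_ffact_shift t m n : t <= n -> 'C(m, n) * n ^_ t = 'C(m - t, n - t) * m ^_ t.
Proof.
elim: t m n => [|t IH] m n ht; first by rewrite !subn0 !ffactn0.
case: n ht => [|n] // ht; case: m => [|m]; first by rewrite bin0n ffact0n !muln0.
rewrite ffactSS mulnA (mulnC _ n.+1) -(mul_bin_diag m.+1 n) /= -mulnA (IH m n ht).
by rewrite ffactSS !subSS; ring.
Qed.

(* The ratio n^_t / n^t of a falling factorial to a power grows with n. *)
Lemma ffact_exp_le t m n : n <= m -> n ^_ t * m ^ t <= m ^_ t * n ^ t.
Proof.
move=> hnm; elim: t => [|t IH]; first by rewrite !ffactn0.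
rewrite !ffactnSr !expnS.
have h : (n - t) * m <= (m - t) * n by nia.
by have := leq_mul IH h; nia.
Qed.

Lemma bin_exp_le t m n : t <= n -> n <= m ->
  'C(m - t, n - t) * m ^ t <= 'C(m, n) * n ^ t.
Proof.
move=> htn hnm.
have hpos : 0 < m ^_ t by rewrite ffact_gt0; apply: leq_trans hnm.
rewrite -(leq_pmul2r hpos) mulnAC -bin_ffact_shift // mulnAC -!mulnA leq_mul2l.
by rewrite mulnC (mulnC (n ^ t)) ffact_exp_le ?orbT.
Qed.

Section Supersets.
Variable T : finType.

Definition supsets (B : {set T}) (n : nat) : {set {set T}} :=
  [set A : {set T} | (B \subset A) && (#|A| == n)].

(* The n-supersets of B correspond to the (n - |B|)-subsets of ~: B. *)
Lemma card_supsets (B : {set T}) n : #|B| <= n ->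
  #|supsets B n| = 'C(#|T| - #|B|, n - #|B|).
Proof.
move=> hBn.
have disjB (C : {set T}) : C \subset ~: B -> (C :|: B) :\: B = C.
  by move=> hC; rewrite setDUl setDv setU0; apply/setDidPl; rewrite disjoints_subset.
have -> : supsets B n =
    [set C :|: B | C in [set C : {set T} | (C \subset ~: B) && (#|C| == n - #|B|)]].
  apply/setP => A; rewrite inE; apply/andP/imsetP => [[hBA /eqP hA]|[C]].
    exists (A :\: B); last by rewrite -{1}(setID A B) (setIidPr hBA) setUC.
    by rewrite inE subsetDr andTb cardsD hA (setIidPr hBA).
  rewrite inE => /andP[hC /eqP hCn] ->; split; first exact: subsetUr.
  rewrite -disjoints_subset in hC.
  by rewrite cardsU (disjoint_setI0 hC) cards0 subn0 hCn subnK.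
rewrite card_in_imset ?cards_draws; first by rewrite [#|~: B|]cardsCs setCK.
by move=> C1 C2; rewrite !inE => /andP[h1 _] /andP[h2 _] e; rewrite -(disjB _ h1) e disjB.
Qed.

Lemma card_supsets_le (B : {set T}) n : #|supsets B n| * #|T| ^ #|B| <= 'C(#|T|, n) * n ^ #|B|.
Proof.
case: (boolP ((#|B| <= n) && (n <= #|T|))) => [/andP[hBn hnT]|hout].
  by rewrite card_supsets // bin_exp_le.
suff -> : supsets B n = set0 by rewrite cards0.
apply/setP => A; rewrite !inE; apply: contraNF hout => /andP[/subset_leq_card hBA /eqP <-].
by rewrite hBA max_card.
Qed.

End Supersets.

Lemma card_family_prod (I T : finType) (F : I -> pred T) :
  #|[pred f : {ffun I -> T} | [forall i, f i \in F i]]| = \prod_(i : I) #|F i|.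
Proof.
have := card_family F; rewrite foldrE big_map big_enum /= => <-.
by apply: eq_card => f; rewrite inE.
Qed.

Lemma prod_expn (I : finType) (F : I -> nat) j :
  (\prod_(i : I) F i) ^ j = \prod_(i : I) F i ^ j.
Proof. by rewrite (big_morph (expn^~ j) (fun a b => expnMn a b j) (exp1n j)). Qed.

Lemma card_le_sum_cover (T I : finType) (A : pred T) (G : pred I) (E : I -> pred T) :
  (forall x, A x -> exists2 i, G i & E i x) -> #|A| <= \sum_(i | G i) #|E i|.
Proof.
move=> coverA; rewrite -sum1_card.
apply: (@leq_trans (\sum_(x in A) \sum_(i | G i) E i x)).
  by apply: leq_sum => x /coverA[i Gi Eix]; rewrite (bigD1 i) //= Eix.
rewrite exchange_big /=; apply: leq_sum => i _.
rewrite -sum1_card big_mkcond [X in _ <= X]big_mkcond /=; apply: leq_sum => x _.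
by rewrite !unfold_in; case: (A x); case: (E i x).
Qed.

(* The pairs {u, v} of distinct vertices, represented as (u, v) with u < v. *)
Definition ltp (k : nat) : pred ('I_k * 'I_k) := [pred p : 'I_k * 'I_k | p.1 < p.2].
Arguments ltp : clear implicits.

Lemma card_ltp k : #|ltp k| = 'C(k, 2).
Proof.
rewrite -sum1_card.
rewrite -(pair_big_dep xpredT (fun u v : 'I_k => u < v) (fun _ _ => 1)) /=.
rewrite (exchange_big_dep xpredT) //= -bin2_sum big_mkord; apply: eq_bigr => v _.
by rewrite -(big_ord_widen_cond _ xpredT (fun=> 1) (ltnW (ltn_ord v))) sum1_card card_ord.
Qed.

Section Labellings.
Variables (k m : nat) (o : 'I_m).

(* A labelling assigns an attribute to each ordered pair; only the pairs in
   [ltp k] matter, and the others carry the dummy label [o]. *)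
Definition labelling := {ffun 'I_k * 'I_k -> 'I_m}.

Definition pair_of (u v : 'I_k) : 'I_k * 'I_k := if u < v then (u, v) else (v, u).

Definition labels_at (g : labelling) (v : 'I_k) : {set 'I_m} :=
  [set g (pair_of u v) | u in [set~ v]].

Definition rainbow_labelling (g : labelling) : bool :=
  (g \in pffun_on o (ltp k) predT) &&
  [forall p, forall q, [&& ltp k p, ltp k q & g p == g q] ==> (p == q)].

Lemma card_rainbow_labellings : #|[pred g | rainbow_labelling g]| <= m ^ 'C(k, 2).
Proof.
rewrite -card_ltp -[X in X ^ _]card_ord -(card_pffun_on o (ltp k) predT).
by apply: subset_leq_card; apply/subsetP => g; rewrite inE => /andP[].
Qed.

Lemma pair_of_ltp u v : u != v -> ltp k (pair_of u v).
Proof. by rewrite /pair_of -(inj_eq val_inj) /= => huv; case: ltngtP huv. Qed.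

Lemma card_labels_at g v : rainbow_labelling g -> #|labels_at g v| = k - 1.
Proof.
case/andP => _ /forallP g_inj.
rewrite card_in_imset; first by rewrite cardsC1 card_ord subn1.
move=> u u'; rewrite !inE => hu hu' e.
have := forallP (g_inj (pair_of u v)) (pair_of u' v); rewrite !pair_of_ltp // e eqxx /=.
rewrite /pair_of -!(inj_eq val_inj) /= in hu hu' *.
move/eqP; case: ltngtP => [_|_|/val_inj uv]; case: ltngtP => [_|_|/val_inj u'v] //=;
  by case=> *; subst; rewrite ?eqxx in hu hu' *.
Qed.

Lemma rainbow_labelling_of_clique (S : outcome k m) : has_rainbow_clique S ->
  exists2 g, rainbow_labelling g & forall v, labels_at g v \subset S v.
Proof.
case/existsP => f /andP[/forallP f_in /forallP f_inj].
exists [ffun p : 'I_k * 'I_k => if ltp k p then f p else o].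
  apply/andP; split.
    apply/pffun_onP; split=> //; apply/subsetP => p; rewrite inE ffunE.
    by rewrite unfold_in; case: ifP => // _; rewrite eqxx.
  apply/forallP => -[u v]; apply/forallP => -[u' v']; rewrite !ffunE.
  apply/implyP => /and3P[huv hu'v']; rewrite huv hu'v' => e.
  have := forallP (forallP (forallP (f_inj u) v) u') v'.
  by rewrite (huv : u < v) (hu'v' : u' < v') e /= => /andP[/eqP -> /eqP ->].
move=> v; apply/subsetP => a /imsetP[u]; rewrite !inE => huv ->.
rewrite ffunE pair_of_ltp //.
have := forallP (f_in (pair_of u v).1) (pair_of u v).2.
rewrite -surjective_pairing (pair_of_ltp huv : _ < _) /= /pair_of.
by case: ifP => _; rewrite inE => /andP[].
Qed.

End Labellings.

Section Counting.
Variables (k m : nat) (o : 'I_m) (n : 'I_k -> nat).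

Definition size_profile : pred (outcome k m) :=
  [pred S : outcome k m | [forall v, #|S v| == n v]].

Definition compatible (g : labelling k m) : pred (outcome k m) :=
  [pred S : outcome k m | [forall v, S v \in supsets (labels_at g v) (n v)]].

Lemma card_size_profile : #|size_profile| = \prod_(v < k) 'C(m, n v).
Proof.
rewrite (@eq_card _ _
  [pred S : outcome k m | [forall v, S v \in [pred A : {set 'I_m} | #|A| == n v]]]) //.
rewrite card_family_prod; apply: eq_bigr => v _.
by rewrite -[m in 'C(m, _)]card_ord -card_draws; apply: eq_card => A; rewrite !inE.
Qed.

(* For a fixed rainbow labelling, each S_v must contain the k - 1 labels at v,
   which by [card_supsets_le] costs a factor (n_v/m)^(k-1) per vertex. *)
Lemma card_compatible g : rainbow_labelling o g ->
  #|compatible g| * m ^ (k * (k - 1)) <= #|size_profile| * (\prod_(v < k) n v) ^ (k - 1).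
Proof.
move=> g_rb.
have -> : m ^ (k * (k - 1)) = \prod_(v < k) m ^ (k - 1).
  by rewrite prod_nat_const card_ord -expnM mulnC.
rewrite card_family_prod card_size_profile prod_expn -!big_split /=.
apply: leq_prod => v _; rewrite -(card_labels_at v g_rb).
by have := card_supsets_le (labels_at g v) (n v); rewrite card_ord.
Qed.

(* The counting form of the theorem: summing [card_compatible] over the at
   most m^C(k,2) rainbow labellings, and using k(k-1) = 2 C(k,2). *)
Lemma card_rainbow_profile :
  #|[pred S : outcome k m | has_rainbow_clique S && size_profile S]| * m ^ 'C(k, 2)
    <= #|size_profile| * (\prod_(v < k) n v) ^ (k - 1).
Proof.
have k2 : k * (k - 1) = 'C(k, 2) + 'C(k, 2).
  by rewrite addnn -mul2n -(mul_bin_diag k 1) bin1 subn1.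
have m_gt0 : 0 < m by case: (m) o => [[]|].
have pow_gt0 : 0 < m ^ 'C(k, 2) by rewrite expn_gt0 m_gt0.
rewrite -(leq_pmul2r pow_gt0) -mulnA -expnD -k2.
apply: (@leq_trans ((\sum_(g | rainbow_labelling o g) #|compatible g|) * m ^ (k * (k - 1)))).
  rewrite leq_mul2r card_le_sum_cover ?orbT // => S /andP[/(rainbow_labelling_of_clique o)].
  case=> g g_rb g_sub S_prof; exists g => //.
  by apply/forallP => v; rewrite inE g_sub (forallP S_prof v).
rewrite big_distrl /=.
apply: (@leq_trans (\sum_(g | rainbow_labelling o g)
                      #|size_profile| * (\prod_(v < k) n v) ^ (k - 1))).
  by apply: leq_sum => g; apply: card_compatible.
by rewrite sum_nat_const mulnC leq_mul2l card_rainbow_labellings orbT.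
Qed.

End Counting.

Lemma sizes_event_profile k m (x : 'I_k -> int) (S0 S : outcome k m) :
  sizes_event x S0 -> sizes_event x S = size_profile (fun v => #|S0 v|) S.
Proof. by move=> /forallP S0_x; apply: eq_forallb => v; rewrite -(eqP (S0_x v)) eqz_nat. Qed.

Local Open Scope ring_scope.

Section Conditioning.
Variables (R : realFieldType) (k m : nat) (P : 'I_m.+1 -> R).

Lemma outcome_weight_sizes (S S' : outcome k m) :
  (forall v, #|S v| = #|S' v|) -> outcome_weight P S = outcome_weight P S'.
Proof. by move=> eq_sizes; apply: eq_bigr => v _; rewrite /set_weight eq_sizes. Qed.

Lemma prob_const_weight (B Q : pred (outcome k m)) c :
  (forall S, B S -> outcome_weight P S = c) -> (forall S, Q S -> B S) ->
  prob P Q = #|Q|%:R * c.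
Proof.
move=> wB QB; rewrite /prob (eq_bigr (fun=> c)) ?sumr_const ?mulr_natl // => S /QB.
exact: wB.
Qed.

Lemma cond_prob_const_weight (A B : pred (outcome k m)) c :
  (forall S, B S -> outcome_weight P S = c) -> c != 0 ->
  cond_prob P A B = #|[pred S | A S && B S]|%:R / #|B|%:R.
Proof.
move=> wB c_neq0; rewrite /cond_prob !(prob_const_weight wB) //; last first.
  by move=> S /andP[].
by rewrite invfM mulrACA divff // mulr1.
Qed.

End Conditioning.

Lemma ler_ratio_nat (R : realFieldType) (a b M N : nat) :
  (0 < b)%N -> (0 < M)%N -> (a * M <= b * N)%N -> a%:R / b%:R <= M%:R^-1 * N%:R :> R.
Proof.
move=> b_gt0 M_gt0 le_aM_bN.
rewrite ler_pdivrMr ?ltr0n // -mulrA ler_pdivlMl ?ltr0n // -!natrM ler_nat.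
by rewrite mulnC [X in (_ <= X)%N]mulnC.
Qed.

Theorem mainTheorem15 (R : realFieldType) (k m : nat) (P : 'I_m.+1 -> R)
  (hk : (0 < k)%N) (hm : (0 < m)%N)
  (hP0 : forall i, 0 <= P i) (hP1 : \sum_(i < m.+1) P i = 1)
  (x : 'I_k -> int)
  (hB : 0 < prob P (@sizes_event k m x)) :
  cond_prob P (@has_rainbow_clique k m) (@sizes_event k m x)
    <= (m%:R ^+ 'C(k, 2))^-1 * (\prod_(v < k) (x v)%:~R) ^+ (k - 1).
Proof.
have [S0 S0_B|B_empty] := pickP (@sizes_event k m x); last first.
  by move: hB; rewrite /prob big_pred0 // ltxx.
pose n v := #|S0 v|.
have B_prof S : sizes_event x S = size_profile n S := sizes_event_profile S S0_B.
pose c := outcome_weight P S0.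
have wB S : sizes_event x S -> outcome_weight P S = c.
  by rewrite B_prof => /forallP S_prof; apply: outcome_weight_sizes => v; apply/eqP.
have c_neq0 : c != 0.
  by apply: contraTneq hB => c0; rewrite (prob_const_weight wB) // c0 mulr0 ltxx.
rewrite (cond_prob_const_weight _ wB c_neq0).
rewrite (eq_card (B := [pred S | has_rainbow_clique S && size_profile n S])); last first.
  by move=> S; rewrite !unfold_in /= B_prof.
rewrite (@eq_card _ (@sizes_event k m x) (size_profile n)); last first.
  by move=> S; rewrite -!topredE /= B_prof.
rewrite (eq_bigr (fun v => (n v)%:R)) => [|v _]; last by rewrite -(eqP (forallP S0_B v)).
rewrite -natr_prod -!natrX; apply: ler_ratio_nat.
- by apply/card_gt0P; exists S0; rewrite -topredE /= -B_prof.
- by rewrite expn_gt0 hm.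
- exact: (card_rainbow_profile (Ordinal hm)).
Qed.
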